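(* Let $X$ be a finite set, $f:2^X\to\mathbb{R}_{\ge0}$ a normalized monotone submodular function, $k\ge2$ and $n\ge k$ integers with $n\le|X|$, and $S^*\in\arg\max_{S\subseteq X,\,|S|\le n}f(S)$. Let $S=S_n=\{x_1,\dots,x_n\}$ be produced by the $k$-wise optimistic algorithm ($S_0=\emptyset$, $x_i\in\arg\max_{x\in X\setminus S_{i-1}}\bar f_k(x\mid S_{i-1})$, $S_i=S_{i-1}\cup\{x_i\}$), and assume $\bar f_k(x_i\mid S_{i-1})>0$ for $k<i\le n$. Then \[ f(S)\ \ge\ \left(1-e^{-\frac{1}{n}\left(k+\sum_{i=k+1}^n \frac{f(x_i\mid S_{i-1})}{\bar f_k(x_i\mid S_{i-1})}\right)}\right) f(S^* ), \] equivalently $f(S)\ge\left(1-e^{-\frac1n\left(k+\sum_{i=k+1}^n(1-c_k(x_i\mid S_{i-1}))\right)}\right)f(S^* )$.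
   Context: $f(x\mid A):=f(A\cup\{x\})-f(A)$. $k$-wise upper estimate: $\bar f_k(x\mid S):=\min_{A\subseteq S,\,|A|<k} f(x\mid A)$. The $k$-marginal curvature of $f$ at $x\in X\setminus S$ given $S$ is $c_k(x\mid S)=1-\max_{A\subseteq S,|A|<k} f(x\mid S)/f(x\mid A)=1-f(x\mid S)/\bar f_k(x\mid S)$. *)

From HB Require Import structures.
From mathcomp Require Import all_boot all_order all_algebra.
From mathcomp Require Import reals sequences exp.
Set Implicit Arguments. Unset Strict Implicit. Unset Printing Implicit Defensive.
Import Order.TTheory GRing.Theory Num.Theory.
Local Open Scope ring_scope.

Section SubmodDefs.
Variables (R : realType) (X : finType).
Implicit Types (f : {set X} -> R) (A B S : {set X}) (x : X).

Definition normalized f := f set0 = 0.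
Definition nonneg_setfun f := forall A, 0 <= f A.
Definition monotone_setfun f := forall A B, A \subset B -> f A <= f B.
Definition submodular f := forall A B, f (A :|: B) + f (A :&: B) <= f A + f B.

Definition marginal f x A : R := f (x |: A) - f A.

(* k-wise upper estimate: min over A ⊆ S with |A| < k of f(x | A).
   The default value f(x | ∅) is itself one of the minimized terms when k >= 1. *)
Definition upper_est (k : nat) f x S : R :=
  \big[Num.min/marginal f x set0]_(A : {set X} | (A \subset S) && (#|A| < k)%N)
     marginal f x A.

(* S_i = {x_0, ..., x_{i-1}} (0-based indexing of the chosen elements) *)
Definition prefix_set (xs : nat -> X) (i : nat) : {set X} :=
  [set xs (nat_of_ord j) | j : 'I_i].

Definition kwise_optimistic_run (k : nat) f (n : nat) (xs : nat -> X) :=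
  forall i, (i < n)%N ->
    xs i \notin prefix_set xs i /\
    forall y, y \notin prefix_set xs i ->
      upper_est k f y (prefix_set xs i) <= upper_est k f (xs i) (prefix_set xs i).

End SubmodDefs.

From HB Require Import structures.
From mathcomp Require Import all_boot all_order all_algebra.
From mathcomp Require Import reals sequences exp.
From mathcomp Require Import ring lra.
Import Order.TTheory GRing.Theory Num.Theory.
Local Open Scope ring_scope.

(* Let g_j := f(S^opt) - f(S_j) and rho_j := f(x_j | S_j) / fbar_k(x_j | S_j), with
   rho_j := 1 for the first k steps, where fbar_k(x_j | S_j) = f(x_j | S_j).
   By submodularity f(S^opt) <= f(S_j) + sum over y in S^opt of f(y | S_j), and each term
   is at most the greedy value u_j := fbar_k(x_j | S_j), so g_j <= n u_j.  Hence
   g_{j+1} = g_j - rho_j u_j <= (1 - rho_j / n) g_j, and iterating with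
   1 - a <= e^{-a} gives g_n <= e^{-(sum_j rho_j)/n} f(S^opt). *)

Section SubmodularMarginals.
Context {R : realType} {X : finType} {f : {set X} -> R}.
Hypotheses (f_mono : monotone_setfun f) (f_submod : submodular f).
Implicit Types (x y : X) (A B S T : {set X}).

Lemma marginal_ge0 x A : 0 <= marginal f x A.
Proof. by rewrite /marginal subr_ge0; apply: f_mono; apply: subsetUr. Qed.

Lemma le_marginal x A B : A \subset B -> marginal f x B <= marginal f x A.
Proof.
move=> AB; rewrite /marginal.
have := f_submod (x |: A) B.
rewrite -setUA (setUidPr AB).
have : f A <= f ((x |: A) :&: B).
  by apply: f_mono; rewrite subsetI AB andbT subsetUr.
lra.
Qed.

Lemma marginal_le_upper_est k x S : marginal f x S <= upper_est k f x S.
Proof.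
rewrite /upper_est; elim/big_ind: _ => [||A /andP[AS _]].
- exact/le_marginal/sub0set.
- by move=> a b ha hb; rewrite le_min ha hb.
- exact: le_marginal.
Qed.

Lemma upper_est_le_marginal k x S A : A \subset S -> (#|A| < k)%N ->
  upper_est k f x S <= marginal f x A.
Proof.
move=> AS Ak; rewrite /upper_est (bigD1 A) /=; last by rewrite AS Ak.
by rewrite ge_min lexx.
Qed.

Lemma le_add_sum_marginal S T : f T <= f S + \sum_(y in T) marginal f y S.
Proof.
have cover s : f (S :|: [set y in s]) <= f S + \sum_(y <- s) marginal f y S.
  elim: s => [|y s IH].
    by rewrite big_nil addr0 (_ : [set y in [::]] = set0) ?setU0 //; apply/setP.
  rewrite big_cons (_ : S :|: _ = y |: (S :|: [set z in s])); last first.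
    by apply/setP => z; rewrite !inE orbCA.
  have := @le_marginal y _ _ (subsetUl S [set z in s]).
  rewrite /marginal; lra.
have := cover (enum T); rewrite set_enum big_enum; apply: le_trans.
exact/f_mono/subsetUr.
Qed.

End SubmodularMarginals.

Lemma prefix_setS {X : finType} (xs : nat -> X) i :
  prefix_set xs i.+1 = xs i |: prefix_set xs i.
Proof.
apply/setP => y; apply/imsetP/setU1P => [[j _ ->]|[->|/imsetP[j _ ->]]].
- have [ji|ij] := ltnP j i; first by right; apply/imsetP; exists (Ordinal ji).
  by left; congr xs; apply/eqP; rewrite eqn_leq ij -ltnS ltn_ord.
- by exists ord_max.
- by exists (widen_ord (leqnSn i) j).
Qed.

Lemma card_prefix_set {X : finType} (xs : nat -> X) i : (#|prefix_set xs i| <= i)%N.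
Proof. by apply: leq_trans (leq_imset_card _ _) _; rewrite card_ord. Qed.

Lemma prefix_set0 {X : finType} (xs : nat -> X) : prefix_set xs 0 = set0.
Proof. by apply/cards0_eq/eqP; rewrite -leqn0 card_prefix_set. Qed.

Lemma gap_contract (R : realFieldType) (g m u rho N : R) :
  0 <= rho -> 0 < N -> g <= N * u -> rho * u <= m -> g - m <= (1 - rho / N) * g.
Proof.
move=> rho0 N0 gNu rhou.
have : rho / N * g <= rho * u.
  rewrite (_ : rho * u = rho / N * (N * u)); last by field; rewrite gt_eqF.
  by apply: ler_wpM2l => //; rewrite divr_ge0 // ltW.
lra.
Qed.

Lemma le_expR_sum_contraction (R : realType) (g a : nat -> R) (c : R) n :
  0 <= c -> g 0%N <= c ->
  (forall j, (j < n)%N -> a j <= 1) ->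
  (forall j, (j < n)%N -> g j.+1 <= (1 - a j) * g j) ->
  g n <= expR (- \sum_(0 <= j < n) a j) * c.
Proof.
move=> c0 g0c a_le1 g_contr; elim: n a_le1 g_contr => [|n IH] a_le1 g_contr.
  by rewrite big_geq // oppr0 expR0 mul1r.
have gn := IH (fun j jn => a_le1 j (ltnW jn)) (fun j jn => g_contr j (ltnW jn)).
rewrite big_nat_recr //= opprD expRD.
have := expR_ge1Dx (- a n).
have : 0 <= expR (- \sum_(0 <= j < n) a j) * c by rewrite mulr_ge0 ?expR_ge0.
have := g_contr n (ltnSn n); have := a_le1 n (ltnSn n).
set E := expR (- \sum_(0 <= j < n) a j) * c in gn *.
set Ea := expR (- a n) => an1 gSn E0 Ea_ge.
have : (1 - a n) * g n <= (1 - a n) * E by apply: ler_wpM2l => //; lra.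
have : (1 - a n) * E <= Ea * E by apply: ler_wpM2r => //; lra.
rewrite mulrAC -/E mulrC; lra.
Qed.

Section KwiseOptimisticGreedy.
Context {R : realType} {X : finType} {f : {set X} -> R} {k n : nat} {xs : nat -> X}.
Hypotheses (f_mono : monotone_setfun f) (f_submod : submodular f).
Hypothesis run : kwise_optimistic_run k f n xs.
Hypothesis upper_est_gt0 :
  forall j, (k <= j)%N -> (j < n)%N -> 0 < upper_est k f (xs j) (prefix_set xs j).

Definition greedy_ratio j : R :=
  if (j < k)%N then 1
  else marginal f (xs j) (prefix_set xs j) / upper_est k f (xs j) (prefix_set xs j).

Lemma optimum_gap_le_greedy_value (T : {set X}) j : (j < n)%N -> (#|T| <= n)%N ->
  f T - f (prefix_set xs j) <= n%:R * upper_est k f (xs j) (prefix_set xs j).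
Proof.
set S := prefix_set xs j; set u := upper_est k f (xs j) S => jn Tn.
have u_ge0 : 0 <= u := le_trans (marginal_ge0 f_mono _ _)
                                 (marginal_le_upper_est f_mono f_submod _ _ _).
have marg_le_u y : marginal f y S <= u.
  have [yS|yNS] := boolP (y \in S).
    by rewrite /marginal (setUidPr _) ?subrr // sub1set.
  exact: le_trans (marginal_le_upper_est f_mono f_submod k y S) ((run j jn).2 y yNS).
have := le_add_sum_marginal f_mono f_submod S T.
have : \sum_(y in T) marginal f y S <= u *+ #|T|.
  by rewrite -sumr_const; apply: ler_sum => y _.
have : u *+ #|T| <= n%:R * u by rewrite -(mulr_natl u); apply: ler_wpM2r; rewrite ?ler_nat.
lra.
Qed.

Lemma greedy_ratio_mul_le_marginal j : (j < n)%N ->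
  greedy_ratio j * upper_est k f (xs j) (prefix_set xs j)
    <= marginal f (xs j) (prefix_set xs j).
Proof.
rewrite /greedy_ratio => jn; case: ltnP => [jk|kj].
  rewrite mul1r; apply: upper_est_le_marginal (subxx _) _.
  exact: leq_ltn_trans (card_prefix_set xs j) jk.
by rewrite divfK // gt_eqF // upper_est_gt0.
Qed.

Lemma greedy_ratio_ge0 j : (j < n)%N -> 0 <= greedy_ratio j.
Proof.
rewrite /greedy_ratio => jn; case: ltnP => // kj.
by rewrite divr_ge0 ?marginal_ge0 // ltW // upper_est_gt0.
Qed.

Lemma greedy_ratio_le1 j : (j < n)%N -> greedy_ratio j <= 1.
Proof.
rewrite /greedy_ratio => jn; case: ltnP => // kj.
by rewrite ler_pdivrMr ?mul1r ?marginal_le_upper_est // upper_est_gt0.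
Qed.

Lemma sum_greedy_ratio : (k <= n)%N ->
  \sum_(0 <= j < n) greedy_ratio j =
    k%:R + \sum_(k <= j < n)
             marginal f (xs j) (prefix_set xs j) / upper_est k f (xs j) (prefix_set xs j).
Proof.
move=> kn; rewrite (@big_cat_nat _ _ _ k 0 n _ _ (leq0n k) kn) /=; congr (_ + _).
  rewrite (eq_big_nat _ _ (F2 := fun=> 1)) ?sumr_const_nat ?subn0 // => j /andP[_ jk].
  by rewrite /greedy_ratio jk.
by apply: eq_big_nat => j /andP[kj _]; rewrite /greedy_ratio ltnNge kj.
Qed.

End KwiseOptimisticGreedy.
Arguments greedy_ratio {R X} f k xs j.

Theorem corollary2 (R : realType) (X : finType) (f : {set X} -> R)
    (k n : nat) (Sopt : {set X}) (xs : nat -> X) :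
  nonneg_setfun f -> normalized f -> monotone_setfun f -> submodular f ->
  (2 <= k)%N -> (k <= n)%N -> (n <= #|X|)%N ->
  (#|Sopt| <= n)%N ->
  (forall T : {set X}, (#|T| <= n)%N -> f T <= f Sopt) ->
  kwise_optimistic_run k f n xs ->
  (forall i, (k <= i)%N -> (i < n)%N -> 0 < upper_est k f (xs i) (prefix_set xs i)) ->
  f (prefix_set xs n) >=
    (1 - expR (- (n%:R^-1 *
        (k%:R + \sum_(k <= i < n)
                   marginal f (xs i) (prefix_set xs i)
                   / upper_est k f (xs i) (prefix_set xs i))))) * f Sopt.
Proof.
move=> f_ge0 f0 f_mono f_submod k2 kn _ Sopt_n _ run u_gt0.
have n_gt0 : 0 < n%:R :> R by rewrite ltr0n (leq_trans _ kn) // (leq_trans _ k2).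
pose ratio := greedy_ratio f k xs.
pose gap j := f Sopt - f (prefix_set xs j).
have gap0 : gap 0%N <= f Sopt by rewrite /gap prefix_set0 f0 subr0.
have step_le1 j : (j < n)%N -> ratio j / n%:R <= 1.
  move=> jn; rewrite ler_pdivrMr // mul1r.
  apply: le_trans (greedy_ratio_le1 f_mono f_submod u_gt0 j jn) _.
  by rewrite ler1n (leq_ltn_trans _ jn).
have gap_contract_step j : (j < n)%N -> gap j.+1 <= (1 - ratio j / n%:R) * gap j.
  move=> jn; rewrite /gap prefix_setS -(subrK (f (prefix_set xs j)) (f (xs j |: _))).
  rewrite -/(marginal _ _ _) opprD addrA addrAC.
  apply: gap_contract n_gt0
    (optimum_gap_le_greedy_value f_mono f_submod run Sopt j jn Sopt_n) _.
  - exact: greedy_ratio_ge0 f_mono u_gt0 j jn.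
  - exact: greedy_ratio_mul_le_marginal u_gt0 j jn.
have := @le_expR_sum_contraction R gap _ _ n (f_ge0 Sopt) gap0 step_le1 gap_contract_step.
rewrite -mulr_suml sum_greedy_ratio // (mulrC _ n%:R^-1) /gap.
set E := expR _ => gap_n; rewrite mulrBl mul1r; lra.
Qed.
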